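(* Let $X$ and $Y$ be shift spaces with $Y$ irreducible. If $\phi : X \to Y$ is an open code, then $\phi$ is onto.
   Context: Shift spaces are closed shift-invariant subsets of $\mathcal{A}^{\mathbb{Z}}$ ($\mathcal{A}$ finite, with the shift $\sigma(x)_i=x_{i+1}$); a code is a continuous shift-commuting map. $Y$ is irreducible if for all words $u,v$ occurring in $Y$ there is $w$ with $uwv$ occurring in $Y$. Open: images of open sets are open. *)

From mathcomp Require Import all_boot all_order all_algebra.
Set Implicit Arguments. Unset Strict Implicit. Unset Printing Implicit Defensive.

Definition config (A : Type) := int -> A.

Definition shift (A : Type) (x : config A) : config A := fun i => x (i + 1)%R.

(* x and y agree on the central window [-n, n]; the sets {y | agree_on n x y}
   form a neighbourhood basis of x in the product topology of A^Z
   (A finite, discrete). *)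
Definition agree_on (A : Type) (n : nat) (x y : config A) : Prop :=
  forall i : int, (absz i <= n)%N -> x i = y i.

Definition closed_set (A : Type) (X : config A -> Prop) : Prop :=
  forall x, (forall n, exists y, X y /\ agree_on n x y) -> X x.

Definition shift_invariant (A : Type) (X : config A -> Prop) : Prop :=
  (forall x, X x -> X (shift x)) /\
  (forall y, X y -> exists x, X x /\ shift x = y).

Definition shift_space (A : finType) (X : config A -> Prop) : Prop :=
  closed_set X /\ shift_invariant X.

Definition occurs (A : Type) (X : config A -> Prop) (u : seq A) : Prop :=
  exists y, X y /\ exists i : int,
    forall k : nat, (k < size u)%N -> forall d : A, y (i + k%:Z)%R = nth d u k.

Definition irreducible (A : Type) (Y : config A -> Prop) : Prop :=
  forall u v : seq A, occurs Y u -> occurs Y v ->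
    exists w : seq A, occurs Y (u ++ w ++ v).

Definition continuous_on (A B : Type) (X : config A -> Prop)
    (phi : config A -> config B) : Prop :=
  forall x, X x -> forall n : nat, exists m : nat,
    forall y, X y -> agree_on m x y -> agree_on n (phi x) (phi y).

Definition code (A B : Type) (X : config A -> Prop) (Y : config B -> Prop)
    (phi : config A -> config B) : Prop :=
  (forall x, X x -> Y (phi x)) /\ continuous_on X phi /\
  (forall x, X x -> phi (shift x) = shift (phi x)).

Definition rel_open (A : Type) (X : config A -> Prop) (U : config A -> Prop) : Prop :=
  (forall x, U x -> X x) /\
  (forall x, U x -> exists n : nat, forall y, X y -> agree_on n x y -> U y).

Definition image (A B : Type) (phi : config A -> config B) (U : config A -> Prop)
  : config B -> Prop := fun y => exists x, U x /\ phi x = y.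

Definition open_map (A B : Type) (X : config A -> Prop) (Y : config B -> Prop)
    (phi : config A -> config B) : Prop :=
  forall U, rel_open X U -> rel_open Y (image phi U).

Definition onto (A B : Type) (X : config A -> Prop) (Y : config B -> Prop)
    (phi : config A -> config B) : Prop :=
  forall y, Y y -> exists x, X x /\ phi x = y.

(* The image phi(X) is open, nonempty and shift-invariant.  Irreducibility of Y
   lets any word of Y be reached from a word of a point in phi(X) that is deep
   inside phi(X); shifting back shows that phi(X) is dense in Y.  On the other
   hand phi(X) is closed, being the continuous image of the compact space X, so
   phi(X) = Y. *)

From mathcomp Require Import all_boot all_order all_algebra.
From mathcomp Require Import zify.
From Stdlib Require Import FunctionalExtensionality ClassicalEpsilon Classical.

Set Implicit Arguments. Unset Strict Implicit.
Import GRing.Theory.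
Local Open Scope ring_scope.

Definition translate (A : Type) (x : config A) (k : int) : config A :=
  fun i => x (i + k).

Section Translation.
Variable A : Type.
Implicit Types (x : config A) (X : config A -> Prop).

Lemma translate0 x : translate x 0 = x.
Proof. by apply: functional_extensionality => i; rewrite /translate addr0. Qed.

Lemma translateD x k l : translate (translate x k) l = translate x (k + l).
Proof.
by apply: functional_extensionality => i; rewrite /translate addrAC addrA.
Qed.

Lemma translateK x k : translate (translate x k) (- k) = x.
Proof. by rewrite translateD subrr translate0. Qed.

Lemma translateS x k : translate x (k + 1) = shift (translate x k).
Proof. by rewrite -translateD. Qed.

Lemma translate_closed X : shift_invariant X ->
  forall x k, X x -> X (translate x k).
Proof.
case=> Xfwd Xbwd x k Xx.
have [n [->|->]] : exists n : nat, k = n%:Z \/ k = - n%:Z.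
- by case: k => n; [exists n; left | exists n.+1; right; rewrite NegzE].
- elim: n => [|n IHn]; first by rewrite translate0.
  by rewrite -addn1 PoszD translateS; apply: Xfwd.
- elim: n => [|n IHn]; first by rewrite oppr0 translate0.
  have [x' [Xx' x'_shift]] := Xbwd _ IHn.
  by rewrite -addn1 PoszD opprD -translateD -x'_shift -[shift x']/(translate x' 1)
     translateK.
Qed.

End Translation.

Lemma code_translate (A B : Type) (X : config A -> Prop)
    (phi : config A -> config B) :
  shift_invariant X -> (forall x, X x -> phi (shift x) = shift (phi x)) ->
  forall x k, X x -> phi (translate x k) = translate (phi x) k.
Proof.
move=> Xsi phi_shift.
have phi_translate_nat (n : nat) x : X x ->
    phi (translate x n%:Z) = translate (phi x) n%:Z.
  move=> Xx; elim: n => [|n IHn]; first by rewrite !translate0.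
  rewrite -addn1 PoszD !translateS phi_shift ?IHn //.
  exact: translate_closed.
move=> x [n|n] Xx; first exact: phi_translate_nat.
have Xx' := translate_closed Xsi (Negz n) Xx.
rewrite -{2}(translateK x (Negz n)) NegzE opprK phi_translate_nat //.
by rewrite -NegzE translateD addrN translate0.
Qed.

Definition infinitely_often (P : nat -> Prop) : Prop :=
  forall K, exists2 m, (K <= m)%N & P m.

Lemma infinitely_often_pigeonhole (T : finType) (P : nat -> Prop) (f : nat -> T) :
  infinitely_often P -> exists t, infinitely_often (fun m => P m /\ f m = t).
Proof.
move=> infP; apply: NNPP => no_t.
have bound t : exists K, forall m, (K <= m)%N -> P m -> f m <> t.
  apply: NNPP => no_K; apply: no_t; exists t => K; apply: NNPP => no_m.
  by apply: no_K; exists K => m Km Pm fmt; apply: no_m; exists m.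
have [K K_bound] := ClassicalEpsilon.choice _ bound.
have [m Km Pm] := infP (\max_(t : T) K t).
apply: (K_bound (f m) m) => //; apply: leq_trans Km; exact: leq_bigmax.
Qed.

Lemma config_cluster_point (A : finType) (s : nat -> config A) :
  exists x, forall N K, exists2 m, (K <= m)%N & agree_on N x (s m).
Proof.
pose pair_at (m k : nat) := (s m (- k%:Z), s m k%:Z).
have refine (P : nat -> Prop) (k : nat) : infinitely_often P ->
    {c : A * A | infinitely_often (fun m => P m /\ pair_at m k = c)}.
  by move=> infP; apply: constructive_indefinite_description;
     apply: infinitely_often_pigeonhole.
(* A decreasing chain of infinite index sets F k on which the coordinates
   -j and j of s m are frozen to c j for all j < k; x is the diagonal limit. *)
pose F := fix F (k : nat) : {P : nat -> Prop | infinitely_often P} :=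
  match k with
  | 0%N => exist infinitely_often (fun _ => True)
             (fun K => ex_intro2 _ _ K (leqnn K) I)
  | k'.+1 =>
      let c := refine _ k' (svalP (F k')) in
      exist infinitely_often (fun m => sval (F k') m /\ pair_at m k' = sval c)
        (svalP c)
  end.
pose c k := sval (refine _ k (svalP (F k))).
have F_pairs k m : sval (F k) m -> forall j, (j < k)%N -> pair_at m j = c j.
  elim: k m => [|k IHk] m //= [Fkm pair_mk] j.
  by rewrite ltnS leq_eqVlt => /orP[/eqP -> //|]; apply: IHk.
exists (fun i => if 0 <= i then (c (absz i)).2 else (c (absz i)).1) => N K.
have [m Km FNm] := svalP (F N.+1) K.
exists m => // i iN.
have := F_pairs _ _ FNm (absz i) iN.
rewrite /pair_at; case: (c (absz i)) => a b [<- <-] /=.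
by case: ifP => i_ge0; congr s; lia.
Qed.

Lemma closure_image_continuous (A : finType) (B : Type) (X : config A -> Prop)
    (phi : config A -> config B) (y : config B) :
  closed_set X -> continuous_on X phi ->
  (forall m, exists x, X x /\ agree_on m y (phi x)) ->
  exists x, X x /\ phi x = y.
Proof.
move=> Xcl phi_cont approx.
have [s s_approx] := ClassicalEpsilon.choice _ approx.
have [x cluster_x] := config_cluster_point s.
have Xx : X x.
  by apply: Xcl => n; have [m _ xsm] := cluster_x n 0%N; exists (s m); split;
     [exact: (s_approx m).1 | exact: xsm].
exists x; split => //; apply: functional_extensionality => j.
have [M phi_cont_x] := phi_cont x Xx (absz j).
have [m jm xsm] := cluster_x M (absz j).
rewrite (phi_cont_x (s m) (s_approx m).1 xsm j (leqnn _)).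
by rewrite ((s_approx m).2 j jm).
Qed.

Definition word_at (B : Type) (y : config B) (i : int) (u : seq B) : Prop :=
  forall k : nat, (k < size u)%N -> forall d : B, y (i + k%:Z) = nth d u k.

Definition window (B : Type) (z : config B) (n : nat) : seq B :=
  mkseq (fun k => z (k%:Z - n%:Z)) n.*2.+1.

Section Words.
Variable B : Type.
Implicit Types (y z : config B) (u v : seq B).

Lemma word_at_catl y i u v : word_at y i (u ++ v) -> word_at y i u.
Proof.
move=> uv k ku d; have kuv : (k < size (u ++ v))%N by rewrite size_cat ltn_addr.
by rewrite (uv k kuv d) nth_cat ku.
Qed.

Lemma word_at_catr y i u v : word_at y i (u ++ v) -> word_at y (i + size u) v.
Proof.
move=> uv k kv d; have kuv : (size u + k < size (u ++ v))%N.
  by rewrite size_cat ltn_add2l.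
by rewrite -addrA -PoszD (uv _ kuv d) nth_cat ltnNge leq_addr /= addKn.
Qed.

Lemma word_at_window y z i n :
  word_at y i (window z n) -> agree_on n z (translate y (i + n%:Z)).
Proof.
move=> yz j jn; set k := absz (j + n%:Z).
have k_def : k%:Z = j + n%:Z by rewrite /k; lia.
have kn : (k < n.*2.+1)%N by rewrite /k; lia.
have kw : (k < size (window z n))%N by rewrite size_mkseq.
rewrite /translate addrCA -k_def (yz k kw (z 0)) nth_mkseq //.
by rewrite k_def addrK.
Qed.

Lemma occurs_window (Y : config B -> Prop) y n : Y y -> occurs Y (window y n).
Proof.
move=> Yy; exists y; split => //; exists (- n%:Z) => k.
by rewrite size_mkseq => kn d; rewrite nth_mkseq // addrC.
Qed.

End Words.

Lemma irreducible_open_invariant_dense (B : Type) (Y U : config B -> Prop) :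
  shift_invariant Y -> irreducible Y -> rel_open Y U -> (exists u, U u) ->
  (forall u k, U u -> U (translate u k)) ->
  forall y m, Y y -> exists u, U u /\ agree_on m y u.
Proof.
move=> Ysi Yirr [UY Uopen] [u0 Uu0] U_translate y m Yy.
have [n U_nbhd] := Uopen u0 Uu0.
have [w [y' [Yy' [i uwv]]]] :=
  Yirr _ _ (occurs_window n (UY _ Uu0)) (occurs_window m Yy).
(* y' reads window u0 n, then w, then window y m: centred on the first
   window it lies in U, and centred on the last it approximates y. *)
have Uy' : U (translate y' (i + n%:Z)).
  apply: U_nbhd; first exact: translate_closed.
  exact: word_at_window (word_at_catl uwv).
rewrite catA in uwv; set l := size (window u0 n ++ w) in uwv.
exists (translate y' (i + l%:Z + m%:Z)); split.
  have -> : i + l%:Z + m%:Z = (i + n%:Z) + (l%:Z + m%:Z - n%:Z) by lia.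
  by rewrite -translateD; apply: U_translate.
exact: word_at_window (word_at_catr uwv).
Qed.

Theorem lemma2p1 (A B : finType) (X : config A -> Prop) (Y : config B -> Prop)
    (phi : config A -> config B) :
  shift_space X -> shift_space Y -> (exists x, X x) ->
  irreducible Y ->
  code X Y phi -> open_map X Y phi ->
  onto X Y phi.
Proof.
move=> [Xcl Xsi] [_ Ysi] [x0 Xx0] Yirr [_ [phi_cont phi_shift]] phi_open y Yy.
have X_open : rel_open X X by split=> // x _; exists 0%N.
have image_translate (u : config B) (k : int) :
    image phi X u -> image phi X (translate u k).
  case=> x [Xx <-]; exists (translate x k); split; first exact: translate_closed.
  exact: code_translate Xsi phi_shift _ _ Xx.
apply: closure_image_continuous => // m.
have image_nonempty : exists u, image phi X u by exists (phi x0), x0.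
have [u [[x [Xx <-]] yx]] := irreducible_open_invariant_dense Ysi Yirr
  (phi_open X X_open) image_nonempty image_translate m Yy.
by exists x.
Qed.
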